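(* In the setting of the context, if $\mathcal{Q}\cap\mathcal{M}\ne\emptyset$, then the market does not admit strong $\rho$-arbitrage.
   Context: Let $(\Omega,\mathcal{F},\mathbb{P})$ be a probability space and a market: riskless asset $S^0_0=1$, $S^0_1=1+r$, $r>-1$; risky assets $S^1,\dots,S^d$ with constants $S^i_0>0$ and real-valued $\mathcal{F}$-measurable $S^i_1$; returns $R^i:=(S^i_1-S^i_0)/S^i_0$. Standing assumptions: nonredundancy (if $\theta\in\mathbb{R}^{1+d}$ with $\sum_{i=0}^d\theta^iS^i_t=0$ a.s. for $t\in\{0,1\}$ then $\theta=0$), $R^i\in L^1$, $\mathbb{E}[R^i]\ne r$ for some $i$. Excess return: $X_\pi:=\pi\cdot(R-r\mathbf{1})$. $L$ is a Riesz space with $L^\infty\subset L\subset L^1$ containing all $X_\pi$. $\mathcal{D}:=\{Z\in L^1:Z\ge0,\mathbb{E}[Z]=1\}$; $\mathcal{Q}\subset\mathcal{D}$ is convex with $1\in\mathcal{Q}$ and $\rho(X)=\sup_{Z\in\mathcal{Q}}\mathbb{E}[-ZX]$ on $L$, with $\mathbb{E}[-ZX]:=\mathbb{E}[ZX^-]-\mathbb{E}[ZX^+]$ and $\mathbb{E}[-ZX]=\infty$ if $\mathbb{E}[ZX^-]=\infty$. $\mathcal{M}:=\{Z\in\mathcal{D}:\mathbb{E}[Z(R^i-r)]=0\ \forall i\}$. Strong $\rho$-arbitrage: for every $\pi$ there is $\pi'$ with $\mathbb{E}[X_{\pi'}]>\mathbb{E}[X_\pi]$ and $\rho(X_{\pi'})<\rho(X_\pi)$.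 *)

From HB Require Import structures.
From mathcomp Require Import all_boot all_order all_algebra.
From mathcomp Require Import all_classical all_reals all_analysis.
Set Implicit Arguments. Unset Strict Implicit. Unset Printing Implicit Defensive.
Import Order.TTheory GRing.Theory Num.Theory.
Local Open Scope classical_set_scope.
Local Open Scope ring_scope.

Section Market.
Context {dT : measure_display} {T : measurableType dT} {R : realType}.
Variable P : probability T R.
Variable n : nat. (* number d of risky assets *)

Definition ret (S0 : 'I_n -> R) (S1 : 'I_n -> T -> R) (i : 'I_n) : T -> R :=
  fun w => (S1 i w - S0 i) / S0 i.

Definition Xpi (S0 : 'I_n -> R) (S1 : 'I_n -> T -> R) (r : R) (pi : 'I_n -> R)
  : T -> R := fun w => \sum_(i < n) pi i * (ret S0 S1 i w - r).

Definition nonredundant (S0 : 'I_n -> R) (S1 : 'I_n -> T -> R) (r : R) : Prop :=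
  forall (th0 : R) (th : 'I_n -> R),
    th0 * 1 + \sum_(i < n) th i * S0 i = 0 ->
    {ae P, forall w, th0 * (1 + r) + \sum_(i < n) th i * S1 i w = 0} ->
    th0 = 0 /\ (forall i, th i = 0).

Definition Ex (X : T -> R) : \bar R := (\int[P]_w (X w)%:E)%E.

Definition densities : set (T -> R) :=
  [set Z : T -> R | [/\ measurable_fun setT Z, (forall w, 0 <= Z w),
               P.-integrable setT (EFin \o Z) & Ex Z = 1%E]].

(* E[-Z X] := E[Z X^-] - E[Z X^+], and +oo if E[Z X^-] = +oo *)
Definition EnegZX (Z X : T -> R) : \bar R :=
  let a := (\int[P]_w (Z w * Num.max (- X w) 0)%:E)%E in
  if a == +oo%E then +oo%E
  else (a - \int[P]_w (Z w * Num.max (X w) 0)%:E)%E.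

Definition rho (Q : set (T -> R)) (X : T -> R) : \bar R :=
  ereal_sup [set EnegZX Z X | Z in Q].

Definition mart_densities (S0 : 'I_n -> R) (S1 : 'I_n -> T -> R) (r : R)
  : set (T -> R) :=
  [set Z : T -> R | densities Z /\
     forall i : 'I_n,
       P.-integrable setT (EFin \o (fun w => Z w * (ret S0 S1 i w - r))) /\
       Ex (fun w => Z w * (ret S0 S1 i w - r)) = 0%E].

Definition riesz_space (L : set (T -> R)) : Prop :=
  [/\ L (fun _ => 0),
      (forall f g, L f -> L g -> L (fun w => f w + g w)),
      (forall (a : R) f, L f -> L (fun w => a * f w)) &
      (forall f, L f -> L (fun w => Num.max (f w) 0))].

Definition Linf_sub (L : set (T -> R)) : Prop :=
  forall f : T -> R, measurable_fun setT f ->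
    (exists M : R, {ae P, forall w, `|f w| <= M}) -> L f.

Definition sub_L1 (L : set (T -> R)) : Prop :=
  forall f, L f -> P.-integrable setT (EFin \o f).

Definition strong_rho_arbitrage (Q : set (T -> R)) (S0 : 'I_n -> R)
  (S1 : 'I_n -> T -> R) (r : R) : Prop :=
  forall pi : 'I_n -> R, exists pi' : 'I_n -> R,
    (Ex (Xpi S0 S1 r pi) < Ex (Xpi S0 S1 r pi'))%E /\
    (rho Q (Xpi S0 S1 r pi') < rho Q (Xpi S0 S1 r pi))%E.

End Market.

From HB Require Import structures.
From mathcomp Require Import all_boot all_order all_algebra.
From mathcomp Require Import all_classical all_reals all_analysis.

Set Implicit Arguments.
Unset Strict Implicit.
Unset Printing Implicit Defensive.
Import Order.TTheory GRing.Theory Num.Theory.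
Local Open Scope classical_set_scope.
Local Open Scope ring_scope.

(* A martingale density Z in Q prices every excess return at zero, so
   rho(X_pi) >= E[-Z X_pi] = 0 for every pi, whereas rho(X_0) = rho(0) <= 0:
   no portfolio pi' has strictly smaller risk than the null portfolio. *)

Section Market.
Context {dT : measure_display} {T : measurableType dT} {R : realType}.
Variable P : probability T R.

Lemma EnegZX_integrableE (Z X : T -> R) :
  (forall w, 0 <= Z w) ->
  P.-integrable setT (EFin \o (fun w => Z w * X w)) ->
  EnegZX P Z X = (- \int[P]_w (Z w * X w)%:E)%E.
Proof.
move=> Z0 iZX; set f := fun w => Z w * X w.
have negE : (\int[P]_w (Z w * Num.max (- X w) 0)%:E
             = \int[P]_w (EFin \o f)^\- w)%E.
  apply: eq_integral => w _; rewrite funenegE /= -EFin_max; congr (_%:E).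
  by rewrite maxr_pMr // mulr0 /f mulrN.
have posE : (\int[P]_w (Z w * Num.max (X w) 0)%:E
             = \int[P]_w (EFin \o f)^\+ w)%E.
  apply: eq_integral => w _; rewrite funeposE /= -EFin_max; congr (_%:E).
  by rewrite maxr_pMr // mulr0.
have negfin := integrable_neg_fin_num measurableT iZX.
have posfin := integrable_pos_fin_num measurableT iZX.
rewrite /EnegZX /= negE posE.
rewrite -[RHS]/(- \int[P]_w (EFin \o f) w)%E [in RHS]integralE.
rewrite -(fineK negfin) -(fineK posfin) /=.
by rewrite -EFinD opprB addrC.
Qed.

Lemma EnegZX0 (Z : T -> R) : (forall w, 0 <= Z w) -> EnegZX P Z (fun=> 0) = 0%E.
Proof.
move=> Z0; rewrite EnegZX_integrableE //.
  by under eq_integral do rewrite mulr0; rewrite integral0 oppe0.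
by under eq_fun do rewrite mulr0; exact: integrable0.
Qed.

Lemma EnegZX_le_rho (Q : set (T -> R)) (Z X : T -> R) :
  Q Z -> (EnegZX P Z X <= rho P Q X)%E.
Proof. by move=> QZ; apply: ereal_sup_ubound; exists Z. Qed.

Lemma rho0_le0 (Q : set (T -> R)) :
  Q `<=` densities P -> (rho P Q (fun=> 0%R) <= 0)%E.
Proof.
move=> QD; apply: ge_ereal_sup => _ [Z /QD [_ Z0 _ _] <-].
by rewrite EnegZX0.
Qed.

Variable n : nat.
Variables (r : R) (S0 : 'I_n -> R) (S1 : 'I_n -> T -> R).

Lemma Xpi0 : Xpi S0 S1 r (fun=> 0) = fun=> 0.
Proof. by apply: funext => w; rewrite /Xpi big1 // => i _; rewrite mul0r. Qed.

Section MartingaleDensity.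
Variable Z : T -> R.
Hypothesis ZM : mart_densities P S0 S1 r Z.

Let Zret i w := Z w * (ret S0 S1 i w - r).

Let ZXpiE (pi : 'I_n -> R) :
  EFin \o (fun w => Z w * Xpi S0 S1 r pi w)
  = (fun w => \sum_(i < n) (pi i)%:E * (Zret i w)%:E)%E.
Proof.
apply: funext => w /=; rewrite sumEFin /Xpi mulr_sumr; congr (_%:E).
by apply: eq_bigr => i _; rewrite /Zret mulrCA.
Qed.

Let Zret_integrable i : P.-integrable setT (EFin \o Zret i).
Proof. by case: ZM => _ /(_ i) []. Qed.

Lemma mart_density_Xpi_integrable (pi : 'I_n -> R) :
  P.-integrable setT (EFin \o (fun w => Z w * Xpi S0 S1 r pi w)).
Proof.
rewrite ZXpiE; apply: (integrable_sum measurableT) => i _.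
by apply: (integrableZl measurableT); exact: Zret_integrable.
Qed.

Lemma mart_density_Xpi_integral (pi : 'I_n -> R) :
  (\int[P]_w (Z w * Xpi S0 S1 r pi w)%:E = 0)%E.
Proof.
rewrite -[LHS]/(\int[P]_w (EFin \o (fun w => Z w * Xpi S0 S1 r pi w)%R) w)%E.
rewrite ZXpiE (integral_sum measurableT); last first.
  by move=> i; apply: (integrableZl measurableT); exact: Zret_integrable.
apply: big1 => i _.
rewrite (integralZl measurableT); last exact: Zret_integrable.
by case: ZM => _ /(_ i) [_]; rewrite /Ex => ->; rewrite mule0.
Qed.

Lemma mart_density_EnegZX_Xpi (pi : 'I_n -> R) :
  EnegZX P Z (Xpi S0 S1 r pi) = 0%E.
Proof.
case: ZM => -[_ Z0 _ _] _.
rewrite EnegZX_integrableE //; last exact: mart_density_Xpi_integrable.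
by rewrite mart_density_Xpi_integral oppe0.
Qed.

End MartingaleDensity.

Lemma rho_Xpi_ge0 (Q : set (T -> R)) (pi : 'I_n -> R) :
  Q `&` mart_densities P S0 S1 r !=set0 -> (0 <= rho P Q (Xpi S0 S1 r pi))%E.
Proof.
move=> [Z [QZ ZM]].
by rewrite -(mart_density_EnegZX_Xpi ZM pi); exact: EnegZX_le_rho.
Qed.

End Market.

Theorem proposition4p14 (dT : measure_display) (T : measurableType dT)
  (R : realType) (P : probability T R) (n : nat)
  (r : R) (S0 : 'I_n -> R) (S1 : 'I_n -> T -> R)
  (L : set (T -> R)) (Q : set (T -> R)) :
  -1 < r ->
  (forall i, 0 < S0 i) ->
  (forall i, measurable_fun setT (S1 i)) ->
  nonredundant P S0 S1 r ->
  (forall i, P.-integrable setT (EFin \o ret S0 S1 i)) ->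
  (exists i, Ex P (ret S0 S1 i) <> r%:E) ->
  riesz_space L -> Linf_sub P L -> sub_L1 P L ->
  (forall pi : 'I_n -> R, L (Xpi S0 S1 r pi)) ->
  Q `<=` densities P ->
  (forall Z1 Z2 (t : R), Q Z1 -> Q Z2 -> 0 <= t -> t <= 1 ->
     Q (fun w => t * Z1 w + (1 - t) * Z2 w)) ->
  Q (fun _ => 1) ->
  Q `&` mart_densities P S0 S1 r !=set0 ->
  ~ strong_rho_arbitrage P Q S0 S1 r.
Proof.
move=> _ _ _ _ _ _ _ _ _ _ QD _ _ QM /(_ (fun=> 0)) [pi' [_ rho_lt]].
rewrite Xpi0 in rho_lt.
have := le_lt_trans (rho_Xpi_ge0 pi' QM) rho_lt.
by rewrite ltNge rho0_le0.
Qed.
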